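(* Let $B>0$ and let $a_0,\dots,a_T\in[0,B]$ with $a_0>0$. Then $$\sum_{t=1}^{T}\frac{a_t}{\sum_{\tau=0}^{t-1}a_\tau}\le\log_2\!\left(\frac{\sum_{t=0}^{T-1}a_t}{a_0}\right)+1+\frac{2B}{a_0}.$$ *)

From Stdlib Require Import Reals.
Open Scope R_scope.

Fixpoint sumR (n : nat) (f : nat -> R) : R :=
  match n with
  | O => 0
  | S k => sumR k f + f k
  end.

Definition sumR_from (m n : nat) (f : nat -> R) : R :=
  sumR (n - m) (fun i => f (m + i)%nat).

Definition log2 (x : R) : R := ln x / ln 2.

(* With S_t = a_0 + ... + a_(t-1), the potential Phi(s) = log2 (s / a_0) - 2B / s
   increases by at least a_t / S_t from S_t to S_(t+1) = S_t + a_t: the increment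
   of log2 is at least a_t / S_(t+1), and the increment of -2B/s pays for the
   difference a_t^2 / (S_t S_(t+1)) because a_t <= 2B.  Telescoping bounds all but
   the last term by Phi(S_T) - Phi(a_0), and the last term a_T / S_T is absorbed
   by the 2B / S_T left over in Phi(S_T). *)

From Stdlib Require Import Reals Lra Lia.
Open Scope R_scope.

Lemma sumR_S (n : nat) (f : nat -> R) : sumR (S n) f = sumR n f + f n.
Proof. reflexivity. Qed.

Lemma sumR_from_1 (n : nat) (f : nat -> R) :
  sumR_from 1 (n + 1) f = sumR n (fun i => f (S i)).
Proof. unfold sumR_from. now replace (n + 1 - 1)%nat with n by lia. Qed.

Lemma sumR_ge_first (n : nat) (f : nat -> R) :
  (0 < n)%nat -> (forall i, (0 < i < n)%nat -> 0 <= f i) -> f 0%nat <= sumR n f.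
Proof.
  induction n as [|n IH]; intros hn hf; [lia|].
  rewrite sumR_S. destruct n as [|n].
  - simpl. lra.
  - assert (f 0%nat <= sumR (S n) f) by (apply IH; [lia | intros i hi; apply hf; lia]).
    assert (0 <= f (S n)) by (apply hf; lia).
    lra.
Qed.

Lemma sumR_le_telescope (n : nat) (u phi : nat -> R) :
  (forall i, (i < n)%nat -> u i <= phi (S i) - phi i) -> sumR n u <= phi n - phi 0%nat.
Proof.
  induction n as [|n IH]; intros hu; simpl.
  - lra.
  - assert (sumR n u <= phi n - phi 0%nat) by (apply IH; intros i hi; apply hu; lia).
    assert (u n <= phi (S n) - phi n) by (apply hu; lia).
    lra.
Qed.

Lemma ln_ge_1_sub_inv (x : R) : 0 < x -> 1 - / x <= ln x.
Proof.
  intros hx.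
  pose proof (exp_ineq1_le (- ln x)) as H.
  rewrite exp_Ropp, exp_ln in H by exact hx.
  lra.
Qed.

Lemma ln_2_lt_1 : ln 2 < 1.
Proof.
  rewrite <- (ln_exp 1). apply ln_increasing; [lra|].
  pose proof (exp_ineq1 1 ltac:(lra)). lra.
Qed.

Lemma ln_le_log2 (x : R) : 1 <= x -> ln x <= log2 x.
Proof.
  intros hx.
  assert (0 <= ln x).
  { pose proof (ln_ge_1_sub_inv x ltac:(lra)).
    assert (/ x <= 1) by (rewrite <- Rinv_1; apply Rinv_le_contravar; lra).
    lra. }
  pose proof ln_lt_2. pose proof ln_2_lt_1.
  unfold log2. apply (Rmult_le_reg_r (ln 2)); [lra|].
  unfold Rdiv. rewrite Rmult_assoc, Rinv_l by lra. nra.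
Qed.

Lemma log2_div_sub (x y z : R) : 0 < x -> 0 < y -> 0 < z ->
  log2 (x / z) - log2 (y / z) = log2 (x / y).
Proof.
  intros hx hy hz. pose proof ln_lt_2.
  unfold log2, Rdiv.
  rewrite !ln_mult, !ln_Rinv by (try apply Rinv_0_lt_compat; lra).
  field. lra.
Qed.

Lemma ratio_le_ln_increment (B s y : R) : 0 < s -> 0 <= y <= B ->
  y / s <= ln ((s + y) / s) + 2 * B / s - 2 * B / (s + y).
Proof.
  intros hs hy.
  assert (hln : y / (s + y) <= ln ((s + y) / s)).
  { replace (y / (s + y)) with (1 - / ((s + y) / s)) by (field; lra).
    apply ln_ge_1_sub_inv. apply Rdiv_lt_0_compat; lra. }
  assert (hgap : 0 <= y * (2 * B - y) / (s * (s + y))).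
  { apply Rmult_le_pos; [nra | left; apply Rinv_0_lt_compat; nra]. }
  assert (2 * B / s - 2 * B / (s + y)
          = y / s - y / (s + y) + y * (2 * B - y) / (s * (s + y))) by (field; lra).
  lra.
Qed.

Section Potential.

Variables (B a0 : R).
Hypothesis ha0 : 0 < a0.

Definition potential (s : R) : R := log2 (s / a0) - 2 * B / s.

Lemma potential_a0 : potential a0 = - (2 * B / a0).
Proof.
  unfold potential, log2. rewrite Rdiv_diag by lra. rewrite ln_1. lra.
Qed.

Lemma ratio_le_potential_increment (s y : R) : 0 < s -> 0 <= y <= B ->
  y / s <= potential (s + y) - potential s.
Proof.
  intros hs hy.
  pose proof (ratio_le_ln_increment B s y hs hy).
  assert (ln ((s + y) / s) <= log2 ((s + y) / s)).
  { apply ln_le_log2. apply (Rmult_le_reg_r s); [lra|].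
    unfold Rdiv. rewrite Rmult_assoc, Rinv_l by lra. lra. }
  unfold potential.
  rewrite <- (log2_div_sub (s + y) s a0) in * by lra.
  lra.
Qed.

End Potential.

Theorem lemmaB1 (B : R) (T : nat) (a : nat -> R)
  (hB : 0 < B) (hT : (1 <= T)%nat)
  (ha : forall t, (t <= T)%nat -> 0 <= a t <= B)
  (ha0 : 0 < a 0%nat) :
  sumR_from 1 (T + 1) (fun t => a t / sumR t a)
  <= log2 (sumR T a / a 0%nat) + 1 + 2 * B / a 0%nat.
Proof.
  assert (hS : forall t, (0 < t <= T + 1)%nat -> a 0%nat <= sumR t a).
  { intros t ht. apply sumR_ge_first; [lia|]. intros i hi. apply ha. lia. }
  destruct T as [|T]; [lia|].
  rewrite sumR_from_1, sumR_S.
  assert (htel : sumR T (fun i => a (S i) / sumR (S i) a)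
                 <= potential B (a 0%nat) (sumR (S T) a) - potential B (a 0%nat) (sumR 1 a)).
  { apply (sumR_le_telescope T _ (fun i => potential B (a 0%nat) (sumR (S i) a))).
    intros i hi. rewrite (sumR_S (S i)).
    apply ratio_le_potential_increment; [lra | |].
    - pose proof (hS (S i) ltac:(lia)). lra.
    - apply ha. lia. }
  assert (hlast : a (S T) / sumR (S T) a <= 2 * B / sumR (S T) a).
  { pose proof (hS (S T) ltac:(lia)). pose proof (ha (S T) ltac:(lia)).
    apply Rmult_le_compat_r; [left; apply Rinv_0_lt_compat|]; lra. }
  replace (sumR 1 a) with (a 0%nat) in htel by (simpl; ring).
  rewrite potential_a0 in htel by exact ha0.
  unfold potential in htel.
  lra.
Qed.
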